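(* For every perturbation $(F_\epsilon)_{\epsilon>0}$ of a cellular automaton, the set $\mathcal{M}_{\mathrm{stable}}$ of stable measures is convex.
   Context: $\mathcal{A}$ finite; $\mathcal{M}(\mathcal{A}^{\mathbb{Z}})$ is the set of shift-invariant Borel probability measures with the weak topology. A perturbation of a CA $F$ (neighborhood $\mathcal{N}$, local rule $f$) is a family $(F_\epsilon)_{\epsilon>0}$ of probabilistic cellular automata with neighborhood $\mathcal{N}$ and local stochastic matrices $f_\epsilon$ satisfying $f_\epsilon(u,f(u))\ge1-\epsilon$; $F_\epsilon$ acts on measures via the kernel $F_\epsilon(x,[w]_U)=\prod_{i\in U}f_\epsilon(x_{i+\mathcal{N}},w_i)$. $\mathcal{M}_\epsilon$ is the set of $\mu\in\mathcal{M}(\mathcal{A}^{\mathbb{Z}})$ with $F_\epsilon\mu=\mu$. A measure $\nu$ is stable if there exists a family $(\pi_\epsilon)_{\epsilon>0}$ with $\pi_\epsilon\in\mathcal{M}_\epsilon$ and $\pi_\epsilon\to\nu$ weakly as $\epsilon\to0$; $\mathcal{M}_{\mathrm{stable}}$ is the set of stable measures. *)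

From HB Require Import structures.
From mathcomp Require Import all_boot all_order all_algebra.
From mathcomp Require Import all_classical all_reals topology normedtype.
Set Implicit Arguments. Unset Strict Implicit. Unset Printing Implicit Defensive.
Import Order.TTheory GRing.Theory Num.Theory.
Import numFieldTopology.Exports numFieldNormedType.Exports.
Local Open Scope classical_set_scope.
Local Open Scope ring_scope.

(* Shift-invariant Borel probability measures on A^Z, represented by their
   values on cylinders: p w = mu([w]_{0..|w|-1}) = mu([w]_{m..m+|w|-1}) for all m.
   Such a family determines mu uniquely (Kolmogorov/Caratheodory), and every
   consistent family arises from a unique shift-invariant measure. *)
Definition is_sinv_measure (R : realType) (A : finType) (p : seq A -> R) : Prop :=
  [/\ p [::] = 1,
      (forall w, 0 <= p w),
      (forall w, p w = \sum_(a : A) p (rcons w a)) &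
      (forall w, p w = \sum_(a : A) p (a :: w))].

(* Neighborhood N given as a list of offsets in nat (a finite subset of Z up
   to translation, which is irrelevant for shift-invariant measures).
   span N = max N, so x_{i+N} lies in positions i..i+span N. *)
Definition span (N : seq nat) : nat := \max_(j <- N) j.

(* local pattern u_{i+N}, for a word u (indices are in range when used;
   the default d is never used in that case) *)
Definition local (A : Type) (N : seq nat) (d : A) (u : seq A) (i : nat)
  : (size N).-tuple A :=
  map_tuple (fun j => nth d u (i + j)) (in_tuple N).

(* Action of the PCA with neighborhood N and local stochastic matrix
   fe : A^N -> A -> R on a shift-invariant measure p, evaluated on the
   cylinder [w]_{0..|w|-1}:
     (F p)([w]) = sum_{u in A^{|w| + span N}} p(u) prod_{i<|w|} fe(u_{i+N}, w_i). *)
Definition PCA_act (R : realType) (A : finType) (N : seq nat)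
  (fe : (size N).-tuple A -> A -> R) (p : seq A -> R) (w : seq A) : R :=
  \sum_(u : (size w + span N).-tuple A)
     p u * \prod_(i < size w)
             fe (local N (tnth (in_tuple w) i) u i) (tnth (in_tuple w) i).

Definition is_perturbation (R : realType) (A : finType) (N : seq nat)
  (f : (size N).-tuple A -> A) (fe : R -> (size N).-tuple A -> A -> R) : Prop :=
  forall eps : R, 0 < eps ->
    [/\ (forall u b, 0 <= fe eps u b),
        (forall u, \sum_(b : A) fe eps u b = 1) &
        (forall u, 1 - eps <= fe eps u (f u))].

Definition invariant_for (R : realType) (A : finType) (N : seq nat)
  (fe : R -> (size N).-tuple A -> A -> R) (eps : R) (p : seq A -> R) : Prop :=
  is_sinv_measure p /\ (forall w, PCA_act (fe eps) p w = p w).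

(* Weak convergence pi_eps -> nu as eps -> 0+, i.e. convergence on every
   cylinder (equivalent to weak convergence on the compact space A^Z). *)
Definition stable (R : realType) (A : finType) (N : seq nat)
  (fe : R -> (size N).-tuple A -> A -> R) (nu : seq A -> R) : Prop :=
  is_sinv_measure nu /\
  exists pi : R -> seq A -> R,
    (forall eps : R, 0 < eps -> invariant_for fe eps (pi eps)) /\
    (forall w, pi eps w @[eps --> 0^'+] --> nu w).

From HB Require Import structures.
From mathcomp Require Import all_boot all_order all_algebra.
From mathcomp Require Import all_classical all_reals topology normedtype.
Import Order.TTheory GRing.Theory Num.Theory.
Import numFieldTopology.Exports numFieldNormedType.Exports.
Local Open Scope classical_set_scope.
Local Open Scope ring_scope.

(* Each F_eps acts linearly on measures, so a convex combination of
   F_eps-invariant measures is F_eps-invariant; combining two witnessing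
   families pi1, pi2 with the same weights therefore gives invariant measures
   converging, cylinder by cylinder, to the combination of the limits. *)

Lemma is_sinv_measure_conv (R : realType) (A : finType) (p1 p2 : seq A -> R)
    (t : R) :
  is_sinv_measure p1 -> is_sinv_measure p2 -> 0 <= t <= 1 ->
  is_sinv_measure (fun w => t * p1 w + (1 - t) * p2 w).
Proof.
move=> [p1_nil p1_ge0 p1_rcons p1_cons] [p2_nil p2_ge0 p2_rcons p2_cons].
move=> /andP[t_ge0 t_le1]; split.
- by rewrite p1_nil p2_nil !mulr1 addrC subrK.
- by move=> w; rewrite addr_ge0 // mulr_ge0 // subr_ge0.
- by move=> w; rewrite big_split -!mulr_sumr -p1_rcons -p2_rcons.
- by move=> w; rewrite big_split -!mulr_sumr -p1_cons -p2_cons.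
Qed.

Lemma PCA_act_lincomb (R : realType) (A : finType) (N : seq nat)
    (g : (size N).-tuple A -> A -> R) (p1 p2 : seq A -> R) (a b : R)
    (w : seq A) :
  PCA_act g (fun v => a * p1 v + b * p2 v) w =
  a * PCA_act g p1 w + b * PCA_act g p2 w.
Proof.
rewrite /PCA_act !mulr_sumr -big_split; apply: eq_bigr => u _.
by rewrite mulrDl !mulrA.
Qed.

Lemma invariant_for_conv (R : realType) (A : finType) (N : seq nat)
    (fe : R -> (size N).-tuple A -> A -> R) (eps : R) (p1 p2 : seq A -> R)
    (t : R) :
  invariant_for fe eps p1 -> invariant_for fe eps p2 -> 0 <= t <= 1 ->
  invariant_for fe eps (fun w => t * p1 w + (1 - t) * p2 w).
Proof.
move=> [p1_sinv p1_fix] [p2_sinv p2_fix] t01; split.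
  exact: is_sinv_measure_conv.
by move=> w; rewrite PCA_act_lincomb p1_fix p2_fix.
Qed.

Theorem mainTheorem8 (R : realType) (A : finType) (N : seq nat)
  (f : (size N).-tuple A -> A) (fe : R -> (size N).-tuple A -> A -> R) :
  is_perturbation f fe ->
  forall (nu1 nu2 : seq A -> R) (t : R),
    stable fe nu1 -> stable fe nu2 -> 0 <= t -> t <= 1 ->
    stable fe (fun w => t * nu1 w + (1 - t) * nu2 w).
Proof.
move=> _ nu1 nu2 t [nu1_sinv [pi1 [pi1_inv pi1_cvg]]].
move=> [nu2_sinv [pi2 [pi2_inv pi2_cvg]]] t_ge0 t_le1.
have t01 : 0 <= t <= 1 by rewrite t_ge0 t_le1.
split; first exact: is_sinv_measure_conv.
exists (fun eps w => t * pi1 eps w + (1 - t) * pi2 eps w); split.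
  by move=> eps eps_gt0; apply: invariant_for_conv;
    [exact: pi1_inv | exact: pi2_inv |].
by move=> w; apply: cvgD; apply: cvgM => //; exact: cvg_cst.
Qed.
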